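(* The set $\{\operatorname{is}(X): X\in\mathfrak U\}$ is dense in the space of isometry types of compact ultrametric spaces endowed with the Gromov–Hausdorff metric $d_{GH}$.
   Context: $\operatorname{Sp}(X)=\{d(x,y):x\neq y\}$; $\mathfrak U$ is the class of finite ultrametric spaces $X$ with $|\operatorname{Sp}(X)|=|X|-1$. $\operatorname{is}(X)$ denotes the isometry type (class of all metric spaces isometric to $X$). For bounded metric spaces $X,Y$ and $\varepsilon>0$, $d_{GH}(\operatorname{is}(X),\operatorname{is}(Y))<\varepsilon$ iff there is a metric space $(Z,d_Z)$ with subspaces $X',Y'$ isometric to $X,Y$ such that $X'\subseteq\bigcup_{y\in Y'}O_\varepsilon(y)$ and $Y'\subseteq\bigcup_{x\in X'}O_\varepsilon(x)$, where $O_\varepsilon(t)=\{z\in Z:d_Z(t,z)<\varepsilon\}$; $d_{GH}$ is a metric on isometry types of compact metric spaces. *)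

From HB Require Import structures.
From mathcomp Require Import all_boot all_order all_algebra.
From mathcomp Require Import reals.
Set Implicit Arguments. Unset Strict Implicit. Unset Printing Implicit Defensive.
Import Order.TTheory GRing.Theory Num.Theory.
Local Open Scope ring_scope.

Section Defs.
Variable R : realType.

Definition is_metric (T : Type) (d : T -> T -> R) : Prop :=
  [/\ (forall x y, 0 <= d x y),
      (forall x y, d x y = 0 <-> x = y),
      (forall x y, d x y = d y x) &
      (forall x y z, d x z <= d x y + d y z)].

Definition is_ultrametric (T : Type) (d : T -> T -> R) : Prop :=
  is_metric d /\ (forall x y z, d x z <= Num.max (d x y) (d y z)).

Definition metric_open (T : Type) (d : T -> T -> R) (U : T -> Prop) : Prop :=
  forall x, U x -> exists2 e, 0 < e & forall y, d x y < e -> U y.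

Definition metric_compact (T : Type) (d : T -> T -> R) : Prop :=
  forall (I : Type) (U : I -> T -> Prop),
    (forall i, metric_open d (U i)) -> (forall x, exists i, U i x) ->
    exists (n : nat) (F : 'I_n -> I), forall x, exists j, U (F j) x.

Definition isometric_emb (A B : Type) (dA : A -> A -> R) (dB : B -> B -> R)
  (f : A -> B) : Prop := forall a a', dB (f a) (f a') = dA a a'.

(* d_GH(is X, is Y) < eps, via the characterization from the paper *)
Definition GH_lt (X Y : Type) (dX : X -> X -> R) (dY : Y -> Y -> R) (eps : R)
  : Prop :=
  exists (Z : Type) (dZ : Z -> Z -> R), is_metric dZ /\
  exists (f : X -> Z) (g : Y -> Z),
    [/\ isometric_emb dX dZ f, isometric_emb dY dZ g,
        (forall x, exists y, dZ (f x) (g y) < eps) &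
        (forall y, exists x, dZ (g y) (f x) < eps)].

Definition spectrum (X : finType) (d : X -> X -> R) : seq R :=
  undup [seq d p.1 p.2 | p <- enum [pred p : X * X | p.1 != p.2]].

Definition in_frakU (X : finType) (d : X -> X -> R) : Prop :=
  [/\ 0 < #|X|, is_ultrametric d & size (spectrum d) = #|X|.-1]%N.

End Defs.

From HB Require Import structures.
From mathcomp Require Import all_boot all_order all_algebra.
From mathcomp Require Import reals.
From mathcomp Require Import zify lra.
Set Implicit Arguments. Unset Strict Implicit. Unset Printing Implicit Defensive.
Import Order.TTheory GRing.Theory Num.Theory.
Local Open Scope ring_scope.

(* Cover Y by a finite (eps/2)-net and list the net points greedily, each one followed by its
   nearest neighbour among the points not yet listed. In an ultrametric space the distance
   between two listed points is then the maximum of the consecutive gaps between them. Raising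
   the n - 1 gaps by less than eps/2 to pairwise distinct values and taking again maxima of
   consecutive gaps gives an ultrametric on n points whose spectrum is exactly the set of new
   gaps, hence a space of frak U. Its distortion against the net is below eps/2, and gluing it
   to Y with cross distances d(x_i, y) + eps/2 exhibits d_GH < eps. *)

Section ChainDist.
Variables (R : realType) (c : nat -> R).
Hypothesis c_ge0 : forall k, 0 <= c k.

Definition chain_dist (i j : nat) : R :=
  \big[Num.max/0]_(minn i j <= k < maxn i j) c k.

Lemma chain_dist_ge0 i j : 0 <= chain_dist i j.
Proof. exact: bigmax_ge_id. Qed.

Lemma chain_distii i : chain_dist i i = 0.
Proof. by rewrite /chain_dist minnn maxnn big_geq. Qed.

Lemma chain_distC i j : chain_dist i j = chain_dist j i.
Proof. by rewrite /chain_dist minnC maxnC. Qed.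

Lemma le_chain_dist i j k : (minn i j <= k < maxn i j)%N -> c k <= chain_dist i j.
Proof. by move=> hk; rewrite le_bigmax_seq ?mem_index_iota. Qed.

Lemma chain_dist_ultra i j k :
  chain_dist i k <= Num.max (chain_dist i j) (chain_dist j k).
Proof.
rewrite {1}/chain_dist big_seq; apply: bigmax_le => [|m].
  by rewrite le_max chain_dist_ge0.
rewrite mem_index_iota => hm.
have [hij | hjk] : (minn i j <= m < maxn i j \/ minn j k <= m < maxn j k)%N by lia.
- by rewrite le_max le_chain_dist.
- by rewrite le_max (le_chain_dist hjk) orbT.
Qed.

Lemma bigmax_nat_attained m n : (m < n)%N ->
  exists2 k, (m <= k < n)%N & \big[Num.max/0]_(m <= k < n) c k = c k.
Proof.
move=> lt_mn; rewrite -(subnKC lt_mn); move: (n - m.+1)%N => l.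
elim: l m {lt_mn} => [|l IH] m.
  exists m; first by rewrite addn0 leqnn ltnSn.
  by rewrite addn0 big_ltn // big_geq // (max_idPl (c_ge0 m)).
rewrite big_ltn; last lia.
rewrite -addSnnS; have [k hk ->] := IH m.+1; rewrite maxEle.
by case: leP => _; [exists k | exists m] => //; lia.
Qed.

Lemma chain_dist_attained i j : i != j ->
  exists2 k, (minn i j <= k < maxn i j)%N & chain_dist i j = c k.
Proof. move=> ij; apply: bigmax_nat_attained; lia. Qed.

End ChainDist.

Lemma chain_dist_le_add (R : realType) (c c' : nat -> R) (t : R) (i j : nat) :
  0 <= t -> (forall k, (minn i j <= k < maxn i j)%N -> c' k <= c k + t) ->
  chain_dist c' i j <= chain_dist c i j + t.
Proof.
move=> t_ge0 c'_le; rewrite {1}/chain_dist big_seq; apply: bigmax_le => [|k].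
  by rewrite addr_ge0 ?chain_dist_ge0.
by rewrite mem_index_iota => hk; rewrite (le_trans (c'_le k hk)) // lerD2r le_chain_dist.
Qed.

Section UltrametricChains.
Variables (R : realType) (T : finType) (d : T -> T -> R).
Hypotheses (d_refl : forall x, d x x = 0) (dC : forall x y, d x y = d y x)
  (d_ultra : forall x y z, d x z <= Num.max (d x y) (d y z)).

Lemma ultra_nearest x y z : d x y <= d x z -> d x z = Num.max (d x y) (d y z).
Proof.
move=> xy_le_xz; apply/le_anti; rewrite d_ultra ge_max xy_le_xz /=.
by rewrite (le_trans (d_ultra y x z)) // dC ge_max xy_le_xz lexx.
Qed.

Fixpoint max_chain (p : seq T) : Prop :=
  match p with
  | x :: ((y :: _) as t) => max_chain t /\ {in t, forall z, d x z = Num.max (d x y) (d y z)}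
  | _ => True
  end.

(* [y] is followed by its nearest neighbour in [s], for which [ultra_nearest] is the chain condition. *)
Lemma exists_max_chain (s : seq T) (y : T) :
  exists p, [/\ max_chain (y :: p), {subset p <= s} & {subset s <= y :: p}].
Proof.
move: {2}(size s) (leqnn (size s)) => n; elim: n s y => [|n IH] s y.
  by rewrite leqn0 => /nilP ->; exists [::].
case: s => [|z0 s0] hs; first by exists [::].
set s := z0 :: s0 in hs *; have z0s : z0 \in s by rewrite inE eqxx.
case: (arg_minP (fun z => d y z) z0s) => z zs z_nearest.
have [|p [chain_p p_sub s_sub]] := IH (rem z s) z; first by rewrite size_rem //; lia.
have zp_sub : {subset z :: p <= s}.
  by move=> w; rewrite inE => /predU1P [-> // | /p_sub /mem_rem].
exists (z :: p); split => //.
- by split => // w /zp_sub ws; apply/ultra_nearest/z_nearest.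
- move=> w; rewrite (perm_mem (perm_to_rem zs)) inE => /predU1P [->|/s_sub w_zp].
    by rewrite !inE eqxx orbT.
  by rewrite inE w_zp orbT.
Qed.

Lemma max_chain_nth (x0 : T) (p : seq T) (i j : nat) : max_chain p ->
  (i <= j < size p)%N -> d (nth x0 p i) (nth x0 p j) =
  \big[Num.max/0]_(i <= k < j) d (nth x0 p k) (nth x0 p k.+1).
Proof.
elim: p i j => [|x t IH] i j chain_xt hij; first by rewrite ltn0 andbF in hij.
have chain_t : max_chain t by case: t {IH hij} chain_xt => // ? ? [].
case: i hij => [|i] hij; last first.
  case: j hij => [|j] //= hij; rewrite big_add1 /=; exact: IH.
case: j hij => [|j] hij /=; first by rewrite d_refl big_geq.
case: t IH chain_xt chain_t hij => [|y t] IH // [_ chain_x] chain_t hij.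
rewrite big_ltn // big_add1 /= -(IH 0%N j chain_t); last by rewrite /= in hij *; lia.
by apply: chain_x; apply: mem_nth; rewrite /= in hij *; lia.
Qed.

Lemma max_chain_dist (x0 : T) (p : seq T) (i j : nat) : max_chain p ->
  (i < size p)%N -> (j < size p)%N ->
  d (nth x0 p i) (nth x0 p j) = chain_dist (fun k => d (nth x0 p k) (nth x0 p k.+1)) i j.
Proof.
move=> chain_p ip jp; wlog le_ij : i j ip jp / (i <= j)%N.
  by move=> wl; case: (leqP i j) => [|/ltnW] h; [|rewrite dC chain_distC]; apply: wl.
by rewrite /chain_dist (minn_idPl le_ij) (maxn_idPr le_ij) max_chain_nth // le_ij.
Qed.
End UltrametricChains.

Lemma ultrametric_of (R : realType) (T : Type) (d : T -> T -> R) :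
  (forall x y, 0 <= d x y) -> (forall x y, d x y = 0 <-> x = y) ->
  (forall x y, d x y = d y x) -> (forall x y z, d x z <= Num.max (d x y) (d y z)) ->
  is_ultrametric d.
Proof.
move=> d_ge0 d_eq0 dC d_ultra; split => //; split => // x y z.
by rewrite (le_trans (d_ultra x y z)) // ge_max lerDl lerDr !d_ge0.
Qed.

Section ChainSpace.
Variables (R : realType) (n : nat) (c : nat -> R).
Hypotheses (c_ge0 : forall k, 0 <= c k) (c_gt0 : forall k, (k < n.-1)%N -> 0 < c k).

Local Notation dc := (fun i j : 'I_n => chain_dist c i j).

Lemma chain_dist_ultrametric : is_ultrametric dc.
Proof.
apply: ultrametric_of => [i j|i j|i j|i j k]; last exact: chain_dist_ultra.
- exact: chain_dist_ge0.
- split => [dij|->]; last exact: chain_distii.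
  apply/eqP; rewrite -val_eqE; apply: contraT => /= ij.
  have ij_lt : (minn i j < n.-1)%N by have := ltn_ord i; have := ltn_ord j; lia.
  have: 0 < chain_dist c i j by apply: lt_le_trans (c_gt0 ij_lt) (le_chain_dist c _); lia.
  by rewrite dij ltxx.
- exact: chain_distC.
Qed.

Lemma spectrum_chain_dist : spectrum dc =i [seq c k | k <- iota 0 n.-1].
Proof.
move=> v; rewrite mem_undup; apply/mapP/mapP => [[[i j]] | [k]].
- rewrite mem_enum inE /= -val_eqE /= => ij ->.
  have [k hk ->] := chain_dist_attained c_ge0 ij.
  by exists k; rewrite // mem_iota; have := ltn_ord i; have := ltn_ord j; lia.
- rewrite mem_iota add0n => hk ->.
  have k_lt : (k < n)%N by lia.
  have k1_lt : (k.+1 < n)%N by lia.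
  exists (Ordinal k_lt, Ordinal k1_lt); first by rewrite mem_enum inE -val_eqE /= neq_ltn ltnSn.
  rewrite /chain_dist /= (minn_idPl (leqnSn k)) (maxn_idPr (leqnSn k)).
  by rewrite big_ltn // big_geq // (max_idPl (c_ge0 k)).
Qed.

Lemma chain_dist_frakU : (0 < n)%N -> uniq [seq c k | k <- iota 0 n.-1] -> in_frakU dc.
Proof.
move=> n_gt0 c_uniq; split; rewrite ?card_ord //; first exact: chain_dist_ultrametric.
rewrite (perm_size (uniq_perm (undup_uniq _) c_uniq spectrum_chain_dist)).
by rewrite size_map size_iota.
Qed.
End ChainSpace.

Lemma exists_notin_itv (R : realType) (L : seq R) (a b : R) : a < b ->
  exists2 v, a < v < b & v \notin L.
Proof.
move=> ab; have ba_gt0 : 0 < b - a by rewrite subr_gt0.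
pose s := [seq a + (b - a) / k.+2%:R | k <- iota 0 (size L).+1].
have s_uniq : uniq s.
  rewrite map_inj_uniq ?iota_uniq // => k l /addrI /(mulfI (lt0r_neq0 ba_gt0)).
  by move/invr_inj/eqP; rewrite eqr_nat => /eqP [].
have [v vs vL] : exists2 v, v \in s & v \notin L.
  apply/hasP; rewrite has_predC; apply: contraT => /negPn /allP sL.
  by have := uniq_leq_size s_uniq sL; rewrite size_map size_iota ltnn.
exists v => //; move: vs => /mapP [k _ ->].
have k2_gt1 : 1 < k.+2%:R :> R by rewrite ltr1n.
rewrite ltrDl divr_gt0 ?ltr0n //= -ltrBrDl ltr_pdivrMr ?ltr0n //.
by rewrite ltr_pMr.
Qed.

Lemma exists_uniq_perturbation (R : realType) (g : nat -> R) (t : R) (N : nat) :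
  0 < t -> exists cs : seq R,
  [/\ size cs = N, uniq cs & forall k, (k < N)%N -> g k < cs`_k < g k + t].
Proof.
move=> t_gt0; elim: N => [|N [cs [size_cs cs_uniq cs_near]]]; first by exists [::].
have [v v_near v_new] : exists2 v, g N < v < g N + t & v \notin cs.
  by apply: exists_notin_itv; rewrite ltrDl.
exists (rcons cs v); split; first by rewrite size_rcons size_cs.
  by rewrite rcons_uniq v_new.
move=> k; rewrite ltnS leq_eqVlt nth_rcons size_cs => /predU1P [->|k_lt].
  by rewrite ltnn eqxx.
by rewrite k_lt cs_near.
Qed.

Lemma metric_compact_net (R : realType) (T : Type) (d : T -> T -> R) (r : R) :
  is_metric d -> metric_compact d -> 0 < r ->
  exists (n : nat) (F : 'I_n -> T), forall x, exists j, d (F j) x < r.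
Proof.
move=> [_ d_eq0 _ d_tri] d_cpt r_gt0; apply: (d_cpt T (fun y z => d y z < r)).
- move=> y x dyx; exists (r - d y x); first by rewrite subr_gt0.
  by move=> z dxz; apply: le_lt_trans (d_tri y x z) _; rewrite -ltrBrDl.
- by move=> x; exists x; rewrite /= (proj2 (d_eq0 x x)).
Qed.

Section Gluing.
Variables (R : realType) (X Y : Type) (dX : X -> X -> R) (dY : Y -> Y -> R).
Variables (f : X -> Y) (r : R).
Hypotheses (dX_metric : is_metric dX) (dY_metric : is_metric dY) (r_gt0 : 0 < r).
Hypothesis f_distortion : forall a b, dY (f a) (f b) <= dX a b <= dY (f a) (f b) + r.

(* The shift by [r] is what the triangle inequality through [Y] needs, given distortion [r]. *)
Definition glue_dist (u v : X + Y) : R :=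
  match u, v with
  | inl a, inl b => dX a b
  | inr y, inr z => dY y z
  | inl a, inr y | inr y, inl a => dY (f a) y + r
  end.

Lemma glue_dist_metric : is_metric glue_dist.
Proof.
have [dX_ge0 dX_eq0 dXC dX_tri] := dX_metric.
have [dY_ge0 dY_eq0 dYC dY_tri] := dY_metric.
have cross_gt0 a y : 0 < dY (f a) y + r by rewrite ltr_wpDl.
split.
- by case=> [a|y] [b|z] /=; rewrite ?dX_ge0 ?dY_ge0 ?ltW.
- case=> [a|y] [b|z] /=.
  + by split=> [/dX_eq0 -> | [->]] //; apply/dX_eq0.
  + split=> [h|]; last discriminate.
    by have := cross_gt0 a z; rewrite h ltxx.
  + split=> [h|]; last discriminate.
    by have := cross_gt0 b y; rewrite h ltxx.
  + by split=> [/dY_eq0 -> | [->]] //; apply/dY_eq0.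
- by case=> [a|y] [b|z] /=.
- have r_ge0 := ltW r_gt0.
  case=> [a|y] [b|y'] [e|z] /=.
  + exact: dX_tri.
  + have /andP [fab _] := f_distortion a b; have := dY_tri (f a) (f b) z; lra.
  + have /andP [_ fae] := f_distortion a e; have := dY_tri (f a) y' (f e).
    rewrite (dYC y' (f e)); lra.
  + have := dY_tri (f a) y' z; lra.
  + have /andP [fbe _] := f_distortion b e; have := dY_tri (f e) (f b) y.
    rewrite (dYC (f e) (f b)); lra.
  + have := dY_tri y (f b) z; rewrite (dYC y (f b)); lra.
  + have := dY_tri (f e) y' y; rewrite (dYC y' y); lra.
  + exact: dY_tri.
Qed.

Lemma GH_lt_glue : (forall y, exists a, dY (f a) y < r) -> GH_lt dX dY (r *+ 2).
Proof.
move=> f_dense; exists (X + Y)%type, glue_dist; split; first exact: glue_dist_metric.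
exists inl, inr; split => // [a|y].
- exists (f a) => /=; have [_ dY_eq0 _ _] := dY_metric.
  by rewrite (proj2 (dY_eq0 _ _)) // add0r mulr2n ltrDl.
- by have [a fay] := f_dense y; exists a => /=; rewrite mulr2n ltrD2r.
Qed.
End Gluing.

Lemma chain_frakU_approx (R : realType) (Y : Type) (dY : Y -> Y -> R) (pt : nat -> Y)
    (n : nat) (r : R) :
  is_metric dY -> 0 < r -> (0 < n)%N ->
  (forall i j, (i < n)%N -> (j < n)%N ->
     dY (pt i) (pt j) = chain_dist (fun k => dY (pt k) (pt k.+1)) i j) ->
  exists (dX : 'I_n -> 'I_n -> R), in_frakU dX /\
    forall i j : 'I_n, dY (pt i) (pt j) <= dX i j <= dY (pt i) (pt j) + r.
Proof.
move=> [dY_ge0 _ _ _] r_gt0 n_gt0 pt_chain.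
pose g k := dY (pt k) (pt k.+1).
have [cs [size_cs cs_uniq cs_near]] := exists_uniq_perturbation g n.-1 r_gt0.
have c_gt0 k : (k < n.-1)%N -> 0 < cs`_k.
  by move=> /cs_near /andP [gk _]; apply: le_lt_trans (dY_ge0 _ _) gk.
have c_ge0 k : 0 <= cs`_k.
  by case: (ltnP k n.-1) => [/c_gt0/ltW // | k_ge]; rewrite nth_default ?size_cs.
exists (fun i j : 'I_n => chain_dist (nth 0 cs) i j); split.
  apply: chain_dist_frakU => //.
  by change (uniq (mkseq (nth 0 cs) n.-1)); rewrite -size_cs mkseq_nth.
move=> i j; rewrite pt_chain //; have k_lt k : (minn i j <= k < maxn i j)%N -> (k < n.-1)%N.
  by have := ltn_ord i; have := ltn_ord j; lia.
apply/andP; split.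
  rewrite -[X in _ <= X]addr0; apply: chain_dist_le_add => // k /k_lt /cs_near /andP [gk _].
  by rewrite addr0 ltW.
by apply: chain_dist_le_add => [|k /k_lt /cs_near /andP [_ /ltW]] //; apply: ltW.
Qed.

Theorem theorem28 (R : realType) (Y : Type) (dY : Y -> Y -> R) :
  (exists y : Y, True) -> is_ultrametric dY -> metric_compact dY ->
  forall eps : R, 0 < eps ->
  exists (X : finType) (dX : X -> X -> R), in_frakU dX /\ GH_lt dX dY eps.
Proof.
move=> [y0 _] dY_ultra dY_cpt eps eps_gt0.
have [dY_metric dY_max] := dY_ultra; have [_ dY_eq0 dYC _] := dY_metric.
have r_gt0 : 0 < eps / 2 by rewrite divr_gt0.
have [m [F F_net]] := metric_compact_net dY_metric dY_cpt r_gt0.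
have [j0 _] := F_net y0.
pose dF (i j : 'I_m) := dY (F i) (F j).
have dF_refl i : dF i i = 0 by apply/dY_eq0.
have [p [chain_p _ p_cover]] :=
  exists_max_chain (d := dF) (fun i j => dYC _ _) (fun i j k => dY_max _ _ _) (enum 'I_m) j0.
pose q := j0 :: p; pose pt k := F (nth j0 q k).
have [dX [dX_frakU dX_near]] : exists (dX : 'I_(size q) -> 'I_(size q) -> R),
    in_frakU dX /\ forall i j : 'I_(size q), dY (pt i) (pt j) <= dX i j <= dY (pt i) (pt j) + eps / 2.
  apply: chain_frakU_approx => // i j iq jq.
  exact: (max_chain_dist dF_refl (fun i j => dYC _ _) j0 chain_p).
exists 'I_(size q), dX; split => //.
have [_ [dX_metric _] _] := dX_frakU.
rewrite [eps]splitr -mulr2n; apply: (GH_lt_glue dX_metric dY_metric r_gt0 dX_near) => y.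
have [j Fj] := F_net y.
have jq : (index j q < size q)%N by rewrite index_mem; apply/p_cover; rewrite mem_enum.
by exists (Ordinal jq); rewrite /pt /= nth_index // -index_mem.
Qed.
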